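(* Let $\Lambda$ be a lattice, $\phi$ a positive semidefinite quadratic form on $\Lambda\otimes\mathbb{R}$, and $P$ a perfect Delaunay polyhedron in $\mathrm{Del}(\Lambda,\phi)$. Let $\Gamma$ be a sublattice of $\Lambda$ and let $D,D'$ be Delaunay polytopes (of the affine lattices $\Lambda\cap\operatorname{aff}D$, $\Lambda\cap\operatorname{aff}D'$ with respect to the restrictions of $\phi$) such that $\operatorname{vert}P=\operatorname{vert}D\oplus\Gamma=\operatorname{vert}D'\oplus\Gamma$. If $\operatorname{aff}D$ is parallel to $\operatorname{aff}D'$, then $D'=D+\mathbf{u}$ for some $\mathbf{u}\in\Gamma$.
   Context: For a lattice $L$ and positive semidefinite form $\phi$, a Delaunay polyhedron of $\mathrm{Del}(L,\phi)$ is $\operatorname{conv}\mathcal{V}(f)$, where $f$ is a real quadratic polynomial with quadratic part $\phi$, $f\ge0$ on $L$, and $\mathcal{V}(f)=\{\mathbf{z}\in L: f(\mathbf{z})=0\}\ne\emptyset$; its ''vertex set'' $\operatorname{vert}$ means the set $\mathcal{V}(f)$ of lattice points on it (even when the polyhedron is unbounded). It is perfect if $f$ can be chosen so that every real polynomial of degree at most $2$ vanishing on $\mathcal{V}(f)$ is a scalar multiple of $f$. A Delaunay polytope is a bounded Delaunay polyhedron. The notation $\operatorname{vert}P=\operatorname{vert}D\oplus\Gamma$ means that $\operatorname{vert}P=\{\mathbf{v}+\mathbf{u}:\mathbf{v}\in\operatorname{vert}D,\ \mathbf{u}\in\Gamma\}$ and each element of $\operatorname{vert}P$ has a unique such representation.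 *)

From mathcomp Require Import all_boot all_order all_algebra.
From mathcomp Require Import boolp classical_sets reals.
Set Implicit Arguments. Unset Strict Implicit. Unset Printing Implicit Defensive.
Import Order.TTheory GRing.Theory Num.Theory.
Local Open Scope ring_scope.
Local Open Scope classical_set_scope.

(* The lattice Lambda is identified with Z^n inside R^n = Lambda (x) R
   (via a choice of basis); points are row vectors 'rV[R]_n. *)
Definition lattice_pt (R : realType) (n : nat) (x : 'rV[R]_n) : Prop :=
  forall j, x 0 j \is a Num.int.

Definition qform (R : realType) (n : nat) (A : 'M[R]_n) (x : 'rV[R]_n) : R :=
  (x *m A *m x^T) 0 0.

Definition psd_form (R : realType) (n : nat) (A : 'M[R]_n) : Prop :=
  forall x, 0 <= qform A x.

Definition quad_fn (R : realType) (n : nat) (A : 'M[R]_n) (b : 'rV[R]_n) (c : R)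
  (x : 'rV[R]_n) : R := qform A x + (b *m x^T) 0 0 + c.

Definition zero_set (R : realType) (n : nat) (A : 'M[R]_n) (b : 'rV[R]_n) (c : R)
  : set 'rV[R]_n := [set x | lattice_pt x /\ quad_fn A b c x = 0].

Definition convex_hull (R : realType) (n : nat) (S : set 'rV[R]_n) : set 'rV[R]_n :=
  [set x | exists (k : nat) (s : 'I_k -> 'rV[R]_n) (l : 'I_k -> R),
     (forall i, S (s i)) /\ (forall i, 0 <= l i) /\ \sum_(i < k) l i = 1 /\
     x = \sum_(i < k) l i *: s i].

Definition affine_hull (R : realType) (n : nat) (S : set 'rV[R]_n) : set 'rV[R]_n :=
  [set x | exists (k : nat) (s : 'I_k -> 'rV[R]_n) (l : 'I_k -> R),
     (forall i, S (s i)) /\ \sum_(i < k) l i = 1 /\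
     x = \sum_(i < k) l i *: s i].

(* V is the vertex set (set of lattice points) of a Delaunay polyhedron
   conv V(f) of Del(Z^n, phi), phi = qform A. *)
Definition delaunay_vset (R : realType) (n : nat) (A : 'M[R]_n) (V : set 'rV[R]_n)
  : Prop :=
  exists b c, (forall x, lattice_pt x -> 0 <= quad_fn A b c x) /\
    V = zero_set A b c /\ V !=set0.

Definition perfect_delaunay_vset (R : realType) (n : nat) (A : 'M[R]_n)
  (V : set 'rV[R]_n) : Prop :=
  exists b c, (forall x, lattice_pt x -> 0 <= quad_fn A b c x) /\
    V = zero_set A b c /\ V !=set0 /\
    (forall (Q : 'M[R]_n) (b' : 'rV[R]_n) (c' : R),
       (forall x, V x -> quad_fn Q b' c' x = 0) ->
       exists t : R, forall x, quad_fn Q b' c' x = t * quad_fn A b c x).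

(* V is the vertex set of a Delaunay polytope D = conv V of the affine lattice
   Z^n cap aff D, with respect to the restriction of phi to aff D.  A quadratic
   polynomial on aff D with quadratic part phi|aff D is the restriction of a
   quadratic polynomial on R^n with quadratic part phi. Bounded = polytope. *)
Definition delaunay_polytope_vset (R : realType) (n : nat) (A : 'M[R]_n)
  (V : set 'rV[R]_n) : Prop :=
  let H := affine_hull (convex_hull V) in
  exists b c,
    (forall x, lattice_pt x -> H x -> 0 <= quad_fn A b c x) /\
    V = [set x | lattice_pt x /\ H x /\ quad_fn A b c x = 0] /\
    V !=set0 /\
    (exists M : R, forall x, convex_hull V x -> forall j, `|x 0 j| <= M).

Definition sublattice (R : realType) (n : nat) (G : set 'rV[R]_n) : Prop :=
  G 0 /\ (forall x, G x -> lattice_pt x) /\ (forall x y, G x -> G y -> G (x - y)).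

Definition direct_sum (R : realType) (n : nat) (VP VD G : set 'rV[R]_n) : Prop :=
  (forall x, VP x <-> exists v u, VD v /\ G u /\ x = v + u) /\
  (forall v u v' u', VD v -> G u -> VD v' -> G u' -> v + u = v' + u' ->
     v = v' /\ u = u').

Definition parallel (R : realType) (n : nat) (H H' : set 'rV[R]_n) : Prop :=
  exists t, forall x, H' x <-> H (x - t).

(** The quadratic polynomials cutting out vert P and vert D share their
   quadratic part, so their difference is affine; it vanishes on vert D, hence
   on aff D, and therefore vert P meets aff D exactly in vert D.  Writing a
   vertex v' of D' as v + u with v in D and u in Gamma, the parallelism
   aff D' = aff D + t places x - u in aff D for every vertex x of D' and
   y + u in aff D' for every vertex y of D, so vert D' = vert D + u. *)
From mathcomp Require Import all_boot all_order all_algebra.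
From mathcomp Require Import boolp classical_sets reals.
From mathcomp Require Import ring.
Set Implicit Arguments. Unset Strict Implicit. Unset Printing Implicit Defensive.
Import Order.TTheory GRing.Theory Num.Theory.
Local Open Scope ring_scope.
Local Open Scope classical_set_scope.

Section AffineHull.
Variables (R : realType) (n : nat).
Implicit Types (S : set 'rV[R]_n) (x y z : 'rV[R]_n).

Lemma linear_form_sum (d : 'rV[R]_n) k (l : 'I_k -> R) (s : 'I_k -> 'rV[R]_n) :
  (d *m (\sum_(i < k) l i *: s i)^T) 0 0 = \sum_(i < k) l i * (d *m (s i)^T) 0 0.
Proof.
rewrite linear_sum mulmx_sumr summxE; apply: eq_bigr => i _.
by rewrite linearZ /= -scalemxAr mxE.
Qed.

Lemma affine_form_hull_eq0 S (d : 'rV[R]_n) e :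
  (forall x, S x -> (d *m x^T) 0 0 + e = 0) ->
  forall x, affine_hull S x -> (d *m x^T) 0 0 + e = 0.
Proof.
move=> dS0 x [k [s [l [Ss [l1 ->]]]]].
rewrite linear_form_sum -[e]mul1r -l1 big_distrl -big_split /=.
by apply: big1 => i _; rewrite -mulrDr dS0 ?mulr0.
Qed.

Lemma convex_hull_sub_affine_hull S : convex_hull S `<=` affine_hull S.
Proof. by move=> x [k [s [l [Ss [_ [l1 ->]]]]]]; exists k, s, l. Qed.

Lemma sub_convex_hull S : S `<=` convex_hull S.
Proof.
move=> x Sx; exists 1%N, (fun=> x), (fun=> 1).
by rewrite !big_ord1 scale1r.
Qed.

Lemma sub_affine_hull_convex_hull S : S `<=` affine_hull (convex_hull S).
Proof.
by move=> x /sub_convex_hull /sub_convex_hull/convex_hull_sub_affine_hull.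
Qed.

Lemma affine_hull_comb2 S x y a : affine_hull S x -> affine_hull S y ->
  affine_hull S (a *: x + (1 - a) *: y).
Proof.
move=> [k1 [s1 [l1 [Ss1 [l1_1 ->]]]]] [k2 [s2 [l2 [Ss2 [l2_1 ->]]]]].
pose s i := match split i with inl j => s1 j | inr j => s2 j end.
pose l i := match split i with inl j => a * l1 j | inr j => (1 - a) * l2 j end.
have splitl (j : 'I_k1) : split (lshift k2 j) = inl j by apply: (unsplitK (inl j)).
have splitr (j : 'I_k2) : split (rshift k1 j) = inr j by apply: (unsplitK (inr j)).
exists (k1 + k2)%N, s, l; split; first by move=> i; rewrite /s; case: split.
rewrite !big_split_ord /=; split.
  rewrite (eq_bigr (fun j => a * l1 j)) => [|j _]; last by rewrite /l splitl.
  rewrite [X in _ + X](eq_bigr (fun j => (1 - a) * l2 j)) => [|j _]; last by rewrite /l splitr.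
  by rewrite -!big_distrr /= l1_1 l2_1 !mulr1 subrKC.
rewrite !scaler_sumr; congr (_ + _); apply: eq_bigr => j _.
  by rewrite /l /s splitl scalerA.
by rewrite /l /s splitr scalerA.
Qed.

Lemma affine_hull_addB S x y z :
  affine_hull S x -> affine_hull S y -> affine_hull S z ->
  affine_hull S (x + y - z).
Proof.
move=> Sx Sy Sz.
(* x + y - z = 2 (x/2 + y/2) + (1 - 2) z *)
have := affine_hull_comb2 2 (affine_hull_comb2 2^-1 Sx Sy) Sz.
have one_sub_half : (1 : R) - 2^-1 = 2^-1 by field.
have two_half : (2 : R) * 2^-1 = 1 by rewrite mulfV ?pnatr_eq0.
have one_sub2 : (1 - 2 : R) = -1 by ring.
by rewrite one_sub_half one_sub2 scalerDr !scalerA two_half !scale1r scaleN1r.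
Qed.

Lemma convex_hullD S u :
  convex_hull [set x + u | x in S] = [set x + u | x in convex_hull S].
Proof.
apply/seteqP; split => x.
- move=> [k [s [l [Ss [l0 [l1 ->]]]]]].
  exists (\sum_(i < k) l i *: (s i - u)).
    exists k, (fun i => s i - u), l; do ![split => //].
    by move=> i; case: (Ss i) => y Sy <-; rewrite addrK.
  by rewrite (eq_bigr _ (fun i _ => scalerBr _ _ _)) sumrB -scaler_suml l1 scale1r subrK.
- move=> [_ [k [s [l [Ss [l0 [l1 ->]]]]]] <-].
  exists k, (fun i => s i + u), l; do ![split => //]; first by move=> i; exists (s i).
  by rewrite (eq_bigr _ (fun i _ => scalerDr _ _ _)) big_split /= -scaler_suml l1 scale1r.
Qed.

End AffineHull.

Section DelaunaySummands.
Variables (R : realType) (n : nat) (A : 'M[R]_n).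
Implicit Types (VP VD G : set 'rV[R]_n).

Lemma quad_fnB b c b' c' (x : 'rV[R]_n) :
  quad_fn A b c x - quad_fn A b' c' x = ((b - b') *m x^T) 0 0 + (c - c').
Proof.
rewrite /quad_fn mulmxBl [in RHS]mxE [X in _ = _ + X + _]mxE.
set q := qform A x; set p := (b *m _) 0 0; set p' := (b' *m _) 0 0; ring.
Qed.

Lemma perfect_delaunay_vsetW VP : perfect_delaunay_vset A VP -> delaunay_vset A VP.
Proof. by move=> [b [c [f_ge0 [-> [VP_n0 _]]]]]; exists b, c. Qed.

Lemma direct_sum_sub VP VD G : sublattice G -> direct_sum VP VD G -> VD `<=` VP.
Proof. by move=> [G0 _] [VPE _] v VDv; apply/VPE; exists v, 0; rewrite addr0. Qed.

Lemma delaunay_affine_hull_sub VP VD :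
  delaunay_vset A VP -> delaunay_polytope_vset A VD -> VD `<=` VP ->
  VP `&` affine_hull (convex_hull VD) `<=` VD.
Proof.
move=> [bP [cP [_ [VPE _]]]] [bD [cD [_ [VDE _]]]] VD_VP x [VPx HDx].
have fP0 y : VP y -> quad_fn A bP cP y = 0 by rewrite VPE => -[].
have fD_VD y : VD y -> quad_fn A bD cD y = 0 by rewrite {1}VDE => -[_ []].
have diff0 : forall y, affine_hull (convex_hull VD) y ->
    ((bP - bD) *m y^T) 0 0 + (cP - cD) = 0.
  apply: affine_form_hull_eq0 => y /convex_hull_sub_affine_hull.
  apply: affine_form_hull_eq0 => {}y VDy.
  by rewrite -quad_fnB fP0 ?fD_VD ?subr0 //; apply: VD_VP.
rewrite VDE; split; first by move: VPx; rewrite VPE => -[].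
split=> //; apply/eqP; rewrite -oppr_eq0 -sub0r -{1}(fP0 x VPx).
by rewrite quad_fnB diff0.
Qed.

Lemma direct_sum_parallel_translate VP VD VD' G :
  sublattice G -> direct_sum VP VD G -> direct_sum VP VD' G ->
  VP `&` affine_hull (convex_hull VD) `<=` VD ->
  VP `&` affine_hull (convex_hull VD') `<=` VD' ->
  parallel (affine_hull (convex_hull VD)) (affine_hull (convex_hull VD')) ->
  VD' !=set0 -> exists u, G u /\ VD' = [set x + u | x in VD].
Proof.
move=> GG DS DS' VD_hull VD'_hull [t HD'E] [v' VD'v'].
set HD := affine_hull (convex_hull VD).
have [G0 [_ GB]] := GG.
have [v [u [VDv [Gu v'E]]]] := (DS.1 v').1 (direct_sum_sub GG DS' VD'v').
have HDv : HD v by apply: sub_affine_hull_convex_hull.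
have HD'_HD x : VD' x -> HD (x - t) by move=> /sub_affine_hull_convex_hull/HD'E.
exists u; split=> //; apply/seteqP; split => x.
- move=> VD'x; exists (x - u); last by rewrite subrK.
  apply: VD_hull; split.
    by apply/DS'.1; exists x, (- u); do !split=> //; rewrite -sub0r; apply: GB.
  have -> : x - u = (x - t) + v - (v' - t).
    by rewrite v'E; apply/matrixP => i j; rewrite !mxE; ring.
  exact: affine_hull_addB (HD'_HD _ VD'x) HDv (HD'_HD _ VD'v').
- move=> [y VDy <-]; apply: VD'_hull; split; first by apply/DS.1; exists y, u.
  apply/HD'E; have -> : y + u - t = y + (v' - t) - v.
    by rewrite v'E; apply/matrixP => i j; rewrite !mxE; ring.
  exact: affine_hull_addB (sub_affine_hull_convex_hull VDy) (HD'_HD _ VD'v') HDv.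
Qed.

End DelaunaySummands.

Theorem lemma1 (R : realType) (n : nat) (A : 'M[R]_n)
  (VP VD VD' G : set 'rV[R]_n) :
  psd_form A ->
  perfect_delaunay_vset A VP ->
  sublattice G ->
  delaunay_polytope_vset A VD ->
  delaunay_polytope_vset A VD' ->
  direct_sum VP VD G ->
  direct_sum VP VD' G ->
  parallel (affine_hull (convex_hull VD)) (affine_hull (convex_hull VD')) ->
  exists u, G u /\ convex_hull VD' = [set x + u | x in convex_hull VD].
Proof.
move=> _ /perfect_delaunay_vsetW DP GG DD DD' DS DS' par.
have VD'_n0 : VD' !=set0 by case: DD' => [b [c [_ [_ []]]]].
have hull_sub := delaunay_affine_hull_sub DP _ (direct_sum_sub GG _).
have [u [Gu ->]] := direct_sum_parallel_translate GG DS DS'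
  (hull_sub _ DD DS) (hull_sub _ DD' DS') par VD'_n0.
by exists u; rewrite convex_hullD.
Qed.
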